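(* Let $K$ be a finitely generated ring and $I$ a two-sided ideal of $K$ such that the additive group of $K/I$ is finitely generated and $I$, regarded as a ring, is finitely separable. Then $K$ is finitely separable.
   Context: Rings are associative and not necessarily unital. A ring $R$ is finitely separable if for every $r\in R$ and every subring $A\subseteq R$ with $r\notin A$ there exist a finite ring $F$ and a homomorphism $\varphi:R\to F$ with $\varphi(r)\notin\varphi(A)$. *)

From HB Require Import structures.
From mathcomp Require Import all_boot all_algebra.
Set Implicit Arguments. Unset Strict Implicit. Unset Printing Implicit Defensive.
Import GRing.Theory.
Local Open Scope ring_scope.

HB.mixin Record isNURing V of GRing.Zmodule V := {
  nmul : V -> V -> V;
  nmulA : forall x y z, nmul x (nmul y z) = nmul (nmul x y) z;
  nmulDl : forall x y z, nmul (x + y) z = nmul x z + nmul y z;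
  nmulDr : forall x y z, nmul x (y + z) = nmul x y + nmul x z }.

#[short(type="nuRingType")]
HB.structure Definition NURing := {V of isNURing V & GRing.Zmodule V}.

Definition is_subring (R : nuRingType) (A : R -> Prop) : Prop :=
  [/\ A 0, (forall x y, A x -> A y -> A (x - y))
     & (forall x y, A x -> A y -> A (nmul x y))].

Definition is_ideal (R : nuRingType) (I : R -> Prop) : Prop :=
  is_subring I /\ (forall x y, I y -> I (nmul x y) /\ I (nmul y x)).

Definition finite_type (T : eqType) : Prop := exists s : seq T, forall x : T, x \in s.

Definition hom_on (R F : nuRingType) (S : R -> Prop) (f : R -> F) : Prop :=
  forall x y, S x -> S y -> f (x + y) = f x + f y /\ f (nmul x y) = nmul (f x) (f y).

(* The ring S (a subring of R, regarded as a ring) is finitely separable: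
   subrings of S are exactly the subrings of R contained in S, and
   homomorphisms S -> F are maps R -> F that are homomorphisms on S. *)
Definition fin_sep_on (R : nuRingType) (S : R -> Prop) : Prop :=
  forall (r : R) (A : R -> Prop), S r -> is_subring A -> (forall a, A a -> S a) -> ~ A r ->
  exists (F : nuRingType) (f : R -> F),
    [/\ finite_type F, hom_on S f & ~ (exists a, A a /\ f a = f r)].

Definition fin_sep (R : nuRingType) : Prop := fin_sep_on (fun _ : R => True).

Definition fin_gen_ring (R : nuRingType) : Prop :=
  exists g : seq R, forall x : R, forall A : R -> Prop,
    is_subring A -> (forall y, y \in g -> A y) -> A x.

Definition quotient_add_fg (R : nuRingType) (I : R -> Prop) : Prop :=
  exists g : seq R, forall x : R, exists c : 'I_(size g) -> int,
    I (x - \sum_(i < size g) g`_i *~ c i).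

From HB Require Import structures.
From mathcomp Require Import all_boot all_algebra generic_quotient ring_quotient.
From mathcomp Require Import boolp zify.
Set Implicit Arguments. Unset Strict Implicit. Unset Printing Implicit Defensive.
Import GRing.Theory.
Local Open Scope ring_scope.
Local Open Scope quotient_scope.

(* Let [r] lie outside a subring [A] of [K].  It suffices to find an ideal [M] of [K] with
   [K/M] finitely generated as a group and [r] outside [A + M]: finitely generated abelian
   groups are residually finite, so [r] stays outside [A + M + nK] for some [n > 0], and the
   finite ring [K/(M + nK)] separates [r] from [A].  If [r] is not in [A + I], take [M = I].
   Otherwise [r = a + i] with [i] in [I] but not in [A]; separating [i] from the subring
   [A :&: I] of [I] by a finite quotient [f] of the ring [I], take for [M] the largest ideal
   of [K] inside the kernel of [f].  As [K = Z g + I] for a finite [g], whether [x] in [I]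
   lies in [M] only depends on the values of [f] at [x], [g_i x], [x g_j] and [g_i x g_j],
   so [M] has finite index in [I]. *)

Section AdditiveSubgroups.
Variable G : zmodType.
Implicit Types (H P Q : G -> Prop) (g : seq G) (x y a : G).

Definition is_addsubgroup H := H 0 /\ forall x y, H x -> H y -> H (x - y).

Definition add_pred P Q : G -> Prop := fun x => exists p q, [/\ P p, Q q & x = p + q].

Definition zmultiples a : G -> Prop := fun x => exists k : int, x = a *~ k.

Definition muln_pred (n : nat) P : G -> Prop := fun x => exists2 y, P y & x = y *+ n.

Fixpoint zspan g : G -> Prop :=
  if g is a :: g' then add_pred (zmultiples a) (zspan g') else fun x => x = 0.

Section Closure.
Variables (H : G -> Prop) (addsubH : is_addsubgroup H).

Lemma addsub0 : H 0. Proof. by case: addsubH. Qed.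

Lemma addsubB x y : H x -> H y -> H (x - y). Proof. by case: addsubH => _; apply. Qed.

Lemma addsubN x : H x -> H (- x).
Proof. by move=> Hx; rewrite -sub0r; apply: addsubB => //; apply: addsub0. Qed.

Lemma addsubD x y : H x -> H y -> H (x + y).
Proof. by move=> Hx Hy; rewrite -[y]opprK; apply/addsubB/addsubN. Qed.

Lemma addsubMn x n : H x -> H (x *+ n).
Proof.
move=> Hx; elim: n => [|n IHn]; first by rewrite mulr0n; apply: addsub0.
by rewrite mulrS; apply: addsubD.
Qed.

Lemma addsubMz x (k : int) : H x -> H (x *~ k).
Proof.
by move=> Hx; case: k => n; rewrite ?NegzE ?mulrNz -pmulrn; [|apply: addsubN]; apply: addsubMn.
Qed.

End Closure.

Lemma addsubgroup_add_pred P Q :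
  is_addsubgroup P -> is_addsubgroup Q -> is_addsubgroup (add_pred P Q).
Proof.
move=> aP aQ; split; first by exists 0, 0; rewrite addr0; split=> //; apply: addsub0.
move=> _ _ [p [q [Pp Qq ->]]] [p' [q' [Pp' Qq' ->]]].
by exists (p - p'), (q - q'); rewrite opprD addrACA; split=> //; apply: addsubB.
Qed.

Lemma addsubgroup_zmultiples a : is_addsubgroup (zmultiples a).
Proof.
split; first by exists 0.
by move=> _ _ [k ->] [l ->]; exists (k - l); rewrite mulrzBr.
Qed.

Lemma addsubgroup_zspan g : is_addsubgroup (zspan g).
Proof.
elim: g => [|a g IHg] /=; last exact/addsubgroup_add_pred/IHg/addsubgroup_zmultiples.
by split=> // x y -> ->; rewrite subr0.
Qed.

Lemma zspan_mem g a : a \in g -> zspan g a.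
Proof.
elim: g => [|b g IHg] //= /[!inE] /predU1P [->|/IHg zga].
  exists b, 0; split; [by exists 1 | exact: addsub0 (addsubgroup_zspan g) | by rewrite addr0].
by exists 0, a; split=> //; [exists 0 | rewrite add0r].
Qed.

Lemma zspan_ind P g : is_addsubgroup P -> (forall a, a \in g -> P a) -> forall x, zspan g x -> P x.
Proof.
move=> aP; elim: g => [|a g IHg] gP x /=; first by move->; apply: addsub0.
case=> _ [y [[k ->] zy ->]]; apply: addsubD => //.
  by apply: addsubMz => //; apply: gP; rewrite mem_head.
by apply: IHg zy => b gb; apply: gP; rewrite inE gb orbT.
Qed.

Lemma zspan_cat g g' x y : zspan g x -> zspan g' y -> zspan (g ++ g') (x + y).
Proof.
elim: g x => [|a g IHg] x /=; first by move-> => zy; rewrite add0r.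
case=> p [x' [ap zx' ->]] zy; exists p, (x' + y).
by split=> //; [apply: IHg | rewrite addrA].
Qed.

Lemma zspan_sum g (c : 'I_(size g) -> int) : zspan g (\sum_(i < size g) g`_i *~ c i).
Proof.
elim: g c => [|a g IHg] c /=; first by rewrite big_ord0.
rewrite big_ord_recl; exists (a *~ c ord0), (\sum_(i < size g) g`_i *~ c (lift ord0 i)).
by split; [exists (c ord0) | apply: IHg |].
Qed.

Lemma addsub_absz H a (u : int) : is_addsubgroup H -> H (a *~ u) -> H (a *+ `|u|).
Proof.
move=> aH; case: u => n; first by rewrite -pmulrn.
by rewrite NegzE mulrNz => /(addsubN aH); rewrite opprK -pmulrn.
Qed.

Lemma zmultiples_residually_finite H a x : is_addsubgroup H -> ~ H x ->
  exists2 m, (0 < m)%N & ~ add_pred H (zmultiples (a *+ m)) x.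
Proof.
move=> aH; have [[h [_ [Hh [t ->] ->]]] | nHax] := EM (add_pred H (zmultiples a) x); last first.
  by exists 1%N; rewrite ?mulr1n.
move=> Hx; have nHat : ~ H (a *~ t) by move=> Hat; apply: Hx; apply: (addsubD aH Hh Hat).
have Hdiff m h' k : H h' -> h + a *~ t = h' + (a *+ m) *~ k -> H (a *~ (t - k * m%:Z)).
  move=> Hh' e; have -> : a *~ (t - k * m%:Z) = h' - h.
    have -> : h' = h + a *~ t - (a *+ m) *~ k by rewrite e addrK.
    by rewrite [h + _]addrC addrAC addrK mulrzBr pmulrn -mulrzA mulrC.
  exact: addsubB.
(* [m] must avoid [t] modulo the group of [u] with [a *~ u] in [H]: take its positive
   generator if there is one, and [`|t|.+1] otherwise. *)
have [[e e_gt0 He] | nHe] := EM (exists2 e, (0 < e)%N & H (a *+ e)).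
  exists e => // -[h' [_ [Hh' [k ->] eq_x]]]; apply: nHat.
  have := addsubD aH (Hdiff _ _ _ Hh' eq_x) (addsubMz aH k He).
  by rewrite pmulrn -mulrzA -mulrzDr mulrC subrK.
pose m := `|t|.+1; exists m => // -[h' [_ [Hh' [k ->] eq_x]]]; apply: nHat.
have /eqP : t - k * m%:Z = 0.
  apply/eqP; apply: contra_notT nHe => u_neq0; exists `|(t - k * m%:Z)%R|%N.
    by rewrite absz_gt0.
  exact/(addsub_absz aH)/(Hdiff _ _ _ Hh' eq_x).
rewrite subr_eq0 => /eqP e; suff -> : t = 0 by rewrite mulr0z; apply: addsub0.
have := ltnSn `|t|; rewrite {1}e abszM /= -/m => lt_km.
have /eqP : `|k|%N = 0%N by nia.
by rewrite absz_eq0 e => /eqP ->; rewrite mul0r.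
Qed.

Lemma zspan_residually_finite H g x : is_addsubgroup H -> ~ H x ->
  exists2 n, (0 < n)%N & ~ add_pred H (muln_pred n (zspan g)) x.
Proof.
elim: g H => [|a g IHg] H aH Hx.
  by exists 1%N => // -[h [_ [Hh [y -> ->] eq_x]]]; apply: Hx; rewrite eq_x mul0rn addr0.
have [m m_gt0 nHm] := zmultiples_residually_finite a aH Hx.
have [n n_gt0 nHmn] := IHg _ (addsubgroup_add_pred aH (addsubgroup_zmultiples (a *+ m))) nHm.
exists (n * m)%N; first by rewrite muln_gt0 n_gt0.
case=> h [_ [Hh [_ [_ [y [[k ->] zy ->]]] ->] eq_x]]; apply: nHmn; rewrite eq_x.
exists (h + (a *+ m) *~ (k * n%:Z)), (y *+ m *+ n); split.
- by exists h, ((a *+ m) *~ (k * n%:Z)); split=> //; exists (k * n%:Z).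
- by exists (y *+ m) => //; exact: (addsubMn (addsubgroup_zspan g) m zy).
- rewrite -addrA mulnC mulrnDl; congr (h + (_ + _)); last exact: mulrnA.
  by rewrite !pmulrn -!mulrzA mulrCA.
Qed.

Lemma addsubgroup_muln_pred n P : is_addsubgroup P -> is_addsubgroup (muln_pred n P).
Proof.
move=> aP; split; first by exists 0; rewrite ?mul0rn //; apply: addsub0.
by move=> _ _ [x Px ->] [y Py ->]; exists (x - y); rewrite ?mulrnBl //; apply: addsubB.
Qed.

Fixpoint box_combinations (n : nat) g : seq G :=
  if g is a :: g' then [seq a *+ c + z | c <- iota 0 n, z <- box_combinations n g']
  else [:: 0].

Lemma zspan_box_combinations n g x : (0 < n)%N -> zspan g x ->
  exists2 z, z \in box_combinations n g & exists y, x - z = y *+ n.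
Proof.
move=> n_gt0; elim: g x => [|a g IHg] x' /=.
  by move->; exists 0; rewrite ?mem_head //; exists 0; rewrite subr0 mul0rn.
case=> _ [x [[t ->] /IHg [z z_box [y eq_xz]] ->]].
have n_neq0 : n%:Z != 0 by rewrite eqz_nat -lt0n.
have := modz_ge0 t n_neq0; have := @ltz_pmod t n%:Z; rewrite ltz_nat => /(_ n_gt0).
case E : (t %% n%:Z)%Z => [c|//] lt_cn _.
exists (a *+ c + z); first by apply/allpairsP; exists (c, z); rewrite mem_iota.
exists (a *~ (t %/ n%:Z)%Z + y).
rewrite {1}(divz_eq t n%:Z) E mulrzDr -pmulrn mulrnDl -eq_xz.
by rewrite mulrzA -pmulrn opprD -!addrA; congr (_ + _); rewrite addrCA addNKr.
Qed.

End AdditiveSubgroups.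

Section NURingTheory.
Variable K : nuRingType.
Implicit Types (x y z : K) (A I : K -> Prop).

Lemma nmulBl x y z : nmul (x - y) z = nmul x z - nmul y z.
Proof. by apply: (@addIr _ (nmul y z)); rewrite -nmulDl !subrK. Qed.

Lemma nmulBr x y z : nmul z (x - y) = nmul z x - nmul z y.
Proof. by apply: (@addIr _ (nmul z y)); rewrite -nmulDr !subrK. Qed.

Lemma nmul0r x : nmul 0 x = 0.
Proof. by have := nmulBl 0 0 x; rewrite subrr => ->; rewrite subrr. Qed.

Lemma nmulr0 x : nmul x 0 = 0.
Proof. by have := nmulBr 0 0 x; rewrite subrr => ->; rewrite subrr. Qed.

Lemma nmulrnl x y n : nmul (x *+ n) y = nmul x y *+ n.
Proof. by elim: n => [|n IHn]; rewrite ?mulr0n ?nmul0r // !mulrS nmulDl IHn. Qed.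

Lemma nmulrnr x y n : nmul x (y *+ n) = nmul x y *+ n.
Proof. by elim: n => [|n IHn]; rewrite ?mulr0n ?nmulr0 // !mulrS nmulDr IHn. Qed.

Lemma subring_addsubgroup A : is_subring A -> is_addsubgroup A.
Proof. by case. Qed.

Lemma ideal_subring I : is_ideal I -> is_subring I.
Proof. by case. Qed.

Lemma ideal_addsubgroup I : is_ideal I -> is_addsubgroup I.
Proof. by move/ideal_subring/subring_addsubgroup. Qed.

Lemma idealMl I x y : is_ideal I -> I y -> I (nmul x y).
Proof. by case=> _ idI /(idI x) []. Qed.

Lemma idealMr I x y : is_ideal I -> I y -> I (nmul y x).
Proof. by case=> _ idI /(idI x) []. Qed.

Lemma ideal_of_addsubgroup I : is_addsubgroup I ->
  (forall x y, I y -> I (nmul x y) /\ I (nmul y x)) -> is_ideal I.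
Proof. by move=> [I0 IB] idI; split=> //; split=> // x y _ /(idI x) []. Qed.

Lemma subringI A I : is_subring A -> is_subring I -> is_subring (fun x => A x /\ I x).
Proof.
case=> A0 AB AM [I0 IB IM]; split=> // x y [Ax Ix] [Ay Iy].
  by split; [apply: AB | apply: IB].
by split; [apply: AM | apply: IM].
Qed.

End NURingTheory.

Definition fin_separates (K : nuRingType) (r : K) (A : K -> Prop) : Prop :=
  exists (F : nuRingType) (f : K -> F),
    [/\ finite_type F, hom_on (fun _ => True) f & ~ (exists a, A a /\ f a = f r)].

Section IdealQuotient.
Variables (K : nuRingType) (L : K -> Prop) (idealL : is_ideal L).

Definition ideal_pred : {pred K} := fun x => `[< L x >].

Lemma ideal_pred_zmod_closed : zmod_closed ideal_pred.
Proof.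
have aL := ideal_addsubgroup idealL.
split; first exact/asboolP/(addsub0 aL).
by move=> x y /asboolP Lx /asboolP Ly; apply/asboolP; apply: addsubB.
Qed.

Definition ideal_zmodClosed : zmodClosed K :=
  HB.pack ideal_pred (GRing.isZmodClosed.Build K ideal_pred ideal_pred_zmod_closed).

Local Notation quot_ring := (Quotient.quot ideal_zmodClosed).

Lemma eq_quotP x y : \pi_quot_ring x = \pi y <-> L (x - y).
Proof.
split=> [/eqP|Lxy]; last apply/eqP; rewrite -Quotient.idealrBE; first by move/asboolP.
exact/asboolP.
Qed.

Definition quot_mul := lift_op2 quot_ring nmul.

Lemma pi_quot_mul : {morph \pi_quot_ring : x y / nmul x y >-> quot_mul x y}.
Proof.
move=> x y; unlock quot_mul; apply/eq_quotP.
have /eq_quotP Lx := reprK (\pi_quot_ring x); have /eq_quotP Ly := reprK (\pi_quot_ring y).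
set x' := repr _ in Lx *; set y' := repr _ in Ly *.
have aL := ideal_addsubgroup idealL.
rewrite -opprB; apply: (addsubN aL).
have -> : nmul x' y' - nmul x y = nmul (x' - x) y' + nmul x (y' - y).
  by rewrite nmulBl nmulBr addrA subrK.
by apply: (addsubD aL); [apply: idealMr | apply: idealMl].
Qed.

Canonical pi_quot_mul_morph := PiMorph2 pi_quot_mul.

Lemma quot_mulA : forall x y z : quot_ring,
  quot_mul x (quot_mul y z) = quot_mul (quot_mul x y) z.
Proof. by elim/quotW=> x; elim/quotW=> y; elim/quotW=> z; rewrite !piE nmulA. Qed.

Lemma quot_mulDl : forall x y z : quot_ring,
  quot_mul (x + y) z = quot_mul x z + quot_mul y z.
Proof. by elim/quotW=> x; elim/quotW=> y; elim/quotW=> z; rewrite !piE nmulDl. Qed.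

Lemma quot_mulDr : forall x y z : quot_ring,
  quot_mul x (y + z) = quot_mul x y + quot_mul x z.
Proof. by elim/quotW=> x; elim/quotW=> y; elim/quotW=> z; rewrite !piE nmulDr. Qed.

HB.instance Definition _ := isNURing.Build quot_ring quot_mulA quot_mulDl quot_mulDr.

Lemma quot_fin_separates (reps : seq K) A r :
  (forall x, exists2 z, z \in reps & L (x - z)) -> ~ (exists a, A a /\ L (a - r)) ->
  fin_separates r A.
Proof.
move=> repsP nAr; exists quot_ring, \pi; split.
- exists (map \pi reps); elim/quotW=> x.
  by have [z z_reps /eq_quotP ->] := repsP x; apply: map_f.
- by move=> x y _ _; split; [apply: pi_addr | apply: pi_quot_mul].
- by case=> a [Aa /eq_quotP Lar]; apply: nAr; exists a.
Qed.

End IdealQuotient.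

Section FiniteQuotients.
Variable K : nuRingType.
Implicit Types (A M : K -> Prop) (g : seq K).

Definition spans_mod M g := forall x, exists2 s, zspan g s & M (x - s).

Lemma spans_mod_quotient_add_fg I :
  quotient_add_fg I -> exists g, spans_mod I g.
Proof.
case=> g gP; exists g => x; have [c Ic] := gP x.
by exists (\sum_(i < size g) g`_i *~ c i); first exact: zspan_sum.
Qed.

Lemma ideal_add_muln_pred M n :
  is_ideal M -> is_ideal (add_pred M (muln_pred n (fun _ : K => True))).
Proof.
move=> idM; apply: ideal_of_addsubgroup.
  by apply/(addsubgroup_add_pred (ideal_addsubgroup idM))/addsubgroup_muln_pred.
move=> x _ [m [_ [Mm [y _ ->] ->]]]; split.
  exists (nmul x m), (nmul x y *+ n); rewrite nmulDr nmulrnr.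
  by split=> //; [apply: idealMl | exists (nmul x y)].
exists (nmul m x), (nmul y x *+ n); rewrite nmulDl nmulrnl.
by split=> //; [apply: idealMr | exists (nmul y x)].
Qed.

Lemma spans_mod_box_combinations M g n : (0 < n)%N -> spans_mod M g ->
  forall x, exists2 z, z \in box_combinations n g &
    add_pred M (muln_pred n (fun _ => True)) (x - z).
Proof.
move=> n_gt0 gM x; have [s zs Mxs] := gM x.
have [z z_box [y e]] := zspan_box_combinations n_gt0 zs.
exists z => //; exists (x - s), (y *+ n); split=> //; first by exists y.
by rewrite -e addrA subrK.
Qed.

Lemma not_add_pred_muln A M g n r : is_addsubgroup M -> spans_mod M g ->
  ~ add_pred (add_pred A M) (muln_pred n (zspan g)) r ->
  ~ (exists a, A a /\ add_pred M (muln_pred n (fun _ => True)) (a - r)).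
Proof.
move=> aM gM nAMnr [a [Aa [m [_ [Mm [y _ ->] e]]]]]; apply: nAMnr.
have [s zs Mys] := gM y.
exists (a + (- m - (y - s) *+ n)), ((- s) *+ n); split.
- exists a, (- m - (y - s) *+ n); split=> //.
  exact/(addsubB aM)/(addsubMn aM)/Mys/(addsubN aM).
- by exists (- s) => //; apply: (addsubN (addsubgroup_zspan g)).
- have -> : r = a - (m + y *+ n) by rewrite -e opprB addrC subrK.
  by rewrite -addrA mulrnBl mulNrn opprB -addrA [s *+ n - _ - _]addrAC subrr add0r opprD.
Qed.

Lemma fin_separates_of_spans_mod A M g r : is_subring A -> is_ideal M -> spans_mod M g ->
  ~ add_pred A M r -> fin_separates r A.
Proof.
move=> subA idM gM nAMr; have aM := ideal_addsubgroup idM.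
have [n n_gt0 nAMnr] :=
  zspan_residually_finite g (addsubgroup_add_pred (subring_addsubgroup subA) aM) nAMr.
exact: (quot_fin_separates (ideal_add_muln_pred n idM) (spans_mod_box_combinations n_gt0 gM)
         (not_add_pred_muln aM gM nAMnr)).
Qed.

End FiniteQuotients.

Definition finite_range (X : Type) (T : eqType) (c : X -> T) :=
  exists S : seq T, forall x, c x \in S.

Section FiniteRange.
Variable T : eqType.

Fixpoint all_seqs (s : seq T) (n : nat) : seq (seq T) :=
  if n is n'.+1 then [seq a :: l | a <- s, l <- all_seqs s n'] else [:: [::]].

Lemma mem_all_seqs (s l : seq T) : {subset l <= s} -> l \in all_seqs s (size l).
Proof.
elim: l => [|a l IHl] //= sub_al; apply: (allpairs_f (fun a l => a :: l)).
  by apply: sub_al; rewrite mem_head.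
by apply: IHl => x lx; apply: sub_al; rewrite inE lx orbT.
Qed.

Lemma finite_range_finite (X : Type) (c : X -> T) : finite_type T -> finite_range c.
Proof. by case=> s sP; exists s. Qed.

Lemma finite_range_seq (X : Type) n (c : X -> seq T) :
  finite_type T -> (forall x, size (c x) = n) -> finite_range c.
Proof.
case=> s sP size_c; exists (all_seqs s n) => x.
by rewrite -(size_c x); apply: mem_all_seqs => y _; apply: sP.
Qed.

Lemma finite_range_reps (X : eqType) (P : X -> Prop) (c : X -> T) : finite_range c ->
  exists reps : seq X, forall x, P x -> exists2 y, y \in reps & P y /\ c y = c x.
Proof.
case=> S cS; pose pick t := if pselect (exists y, P y /\ c y = t) is left e
  then [:: projT1 (cid e)] else [::].
exists (flatten (map pick S)) => x Px.
suff [y y_pick yP] : exists2 y, y \in pick (c x) & P y /\ c y = c x.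
  by exists y => //; apply/flatten_mapP; exists (c x).
rewrite /pick; case: pselect => [e | []]; last by exists x.
by exists (projT1 (cid e)); [rewrite mem_head | exact: projT2 (cid e)].
Qed.

End FiniteRange.

Lemma finite_range_pair (X : Type) (T1 T2 : eqType) (c1 : X -> T1) (c2 : X -> T2) :
  finite_range c1 -> finite_range c2 -> finite_range (fun x => (c1 x, c2 x)).
Proof.
by move=> [S1 S1P] [S2 S2P]; exists [seq (a, b) | a <- S1, b <- S2] => x; apply: allpairs_f.
Qed.

Section Core.
Variable K : nuRingType.
Implicit Types (I J : K -> Prop) (g : seq K) (d : K).

(* The largest ideal of [K] contained in the additive subgroup [J]. *)
Definition core J : K -> Prop := fun x =>
  [/\ J x, forall k, J (nmul k x), forall k, J (nmul x k) & forall k k', J (nmul (nmul k x) k')].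

Lemma addsubgroup_nmull J d : is_addsubgroup J -> is_addsubgroup (fun k => J (nmul k d)).
Proof.
move=> aJ; split; first by rewrite nmul0r; apply: addsub0.
by move=> x y Jx Jy; rewrite nmulBl; apply: addsubB.
Qed.

Lemma addsubgroup_nmulr J d : is_addsubgroup J -> is_addsubgroup (fun k => J (nmul d k)).
Proof.
move=> aJ; split; first by rewrite nmulr0; apply: addsub0.
by move=> x y Jx Jy; rewrite nmulBr; apply: addsubB.
Qed.

Lemma core_ideal J : is_addsubgroup J -> is_ideal (core J).
Proof.
move=> aJ; apply: ideal_of_addsubgroup.
  split.
    split=> [|k|k|k k']; rewrite ?nmulr0 ?nmul0r; exact: addsub0.
  move=> x y [Jx Jkx Jxk Jkxk] [Jy Jky Jyk Jkyk].
  split=> [|k|k|k k']; rewrite ?nmulBr ?nmulBl; exact: addsubB.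
move=> k x [Jx Jkx Jxk Jkxk]; split; split=> [|k'|k'|k' k''].
- exact: Jkx.
- by rewrite nmulA.
- exact: Jkxk.
- by rewrite nmulA.
- exact: Jxk.
- by rewrite nmulA.
- by rewrite -nmulA.
- by rewrite nmulA -nmulA.
Qed.

Lemma spans_mod_ind I g (P : K -> Prop) : spans_mod I g -> is_addsubgroup P ->
  (forall a, a \in g -> P a) -> (forall i, I i -> P i) -> forall k, P k.
Proof.
move=> gI aP Pg PI k; have [s zs Iks] := gI k.
by rewrite -(subrK s k); apply: addsubD (PI _ Iks) (zspan_ind aP Pg zs).
Qed.

Lemma core_of_generators I g J d : spans_mod I g -> is_addsubgroup J ->
  (forall i x, I i -> J x -> J (nmul i x) /\ J (nmul x i)) -> J d ->
  (forall a, a \in g -> J (nmul a d)) -> (forall b, b \in g -> J (nmul d b)) ->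
  (forall a b, a \in g -> b \in g -> J (nmul (nmul a d) b)) -> core J d.
Proof.
move=> gI aJ IJ Jd Jgd Jdg Jgdg.
have Jkd : forall k, J (nmul k d) :=
  spans_mod_ind gI (addsubgroup_nmull d aJ) Jgd (fun i Ii => (IJ i d Ii Jd).1).
have Jdk : forall k, J (nmul d k) :=
  spans_mod_ind gI (addsubgroup_nmulr d aJ) Jdg (fun i Ii => (IJ i d Ii Jd).2).
have Jkdg b : b \in g -> forall k, J (nmul (nmul k d) b).
  move=> gb; apply: (spans_mod_ind (P := fun k => J (nmul (nmul k d) b)) gI).
  - exact: (addsubgroup_nmull d (addsubgroup_nmull b aJ)).
  - by move=> a ga; apply: Jgdg.
  - by move=> i Ii; rewrite -nmulA; apply: (IJ i _ Ii (Jdg b gb)).1.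
split=> // k; apply: (spans_mod_ind gI (addsubgroup_nmulr _ aJ)) => [b gb | i Ii].
  exact: Jkdg.
exact: (IJ i _ Ii (Jkd k)).2.
Qed.

End Core.

Section Kernel.
Variables (K F : nuRingType) (I : K -> Prop) (f : K -> F).
Hypotheses (subI : is_subring I) (homf : hom_on I f).

Definition kernel_on : K -> Prop := fun x => I x /\ f x = 0.

Lemma hom_onB x y : I x -> I y -> f (x - y) = f x - f y.
Proof.
move=> Ix Iy; have Ixy := addsubB (subring_addsubgroup subI) Ix Iy.
by apply: (@addIr _ (f y)); rewrite -(homf Ixy Iy).1 !subrK.
Qed.

Lemma kernel_on_eq x y : I x -> I y -> f x = f y -> kernel_on (x - y).
Proof.
move=> Ix Iy fxy; split; first exact: (addsubB (subring_addsubgroup subI) Ix Iy).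
by rewrite hom_onB // fxy subrr.
Qed.

Lemma addsubgroup_kernel_on : is_addsubgroup kernel_on.
Proof.
have I0 := addsub0 (subring_addsubgroup subI).
split; first by have := kernel_on_eq I0 I0 erefl; rewrite subrr.
by move=> x y [Ix fx0] [Iy fy0]; apply: kernel_on_eq => //; rewrite fx0 fy0.
Qed.

Lemma kernel_onM i x : I i -> kernel_on x -> kernel_on (nmul i x) /\ kernel_on (nmul x i).
Proof.
case: subI => _ _ IM Ii [Ix fx0]; split; split; try exact: IM.
  by rewrite (homf Ii Ix).2 fx0 nmulr0.
by rewrite (homf Ix Ii).2 fx0 nmul0r.
Qed.

End Kernel.

Lemma spans_mod_core (K F : nuRingType) (I : K -> Prop) (f : K -> F) g :
  is_ideal I -> spans_mod I g -> finite_type F -> hom_on I f ->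
  exists gm, spans_mod (core (kernel_on I f)) gm.
Proof.
move=> idI gI finF homf; have subI := ideal_subring idI.
pose cls x := (f x, [seq f (nmul a x) | a <- g], [seq f (nmul x b) | b <- g],
               [seq f (nmul (nmul a x) b) | a <- g, b <- g]).
(* Elements of [I] with the same [cls] differ by an element of the core. *)
have cls_fin : finite_range cls.
  apply: finite_range_pair; last by apply: (finite_range_seq finF) => x; rewrite size_allpairs.
  apply: finite_range_pair; last by apply: (finite_range_seq finF) => x; rewrite size_map.
  apply: finite_range_pair; last by apply: (finite_range_seq finF) => x; rewrite size_map.
  exact: finite_range_finite.
have [reps repsP] := finite_range_reps I cls_fin.
exists (g ++ reps) => x; have [s zs Ixs] := gI x; have [y reps_y [Iy cls_y]] := repsP _ Ixs.
exists (s + y); first exact: zspan_cat zs (zspan_mem reps_y).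
rewrite opprD addrA.
move: cls_y => [/esym fE /esym/eq_in_map fEl /esym/eq_in_map fEr /esym/eq_in_allpairs fElr].
have kerP := kernel_on_eq subI homf.
apply: (core_of_generators gI (addsubgroup_kernel_on subI homf) (kernel_onM subI homf)).
- exact: kerP.
- by move=> a ga; rewrite nmulBr; apply: kerP; rewrite ?fEl //; apply: idealMl.
- by move=> b gb; rewrite nmulBl; apply: kerP; rewrite ?fEr //; apply: idealMr.
- move=> a b ga gb; rewrite nmulBr nmulBl; apply: kerP; rewrite ?fElr //;
    by apply: idealMr => //; apply: idealMl.
Qed.

Lemma not_add_pred_kernel (K F : nuRingType) (A I M : K -> Prop) (f : K -> F) r a0 i0 :
  is_subring A -> is_subring I -> hom_on I f -> (forall m, M m -> kernel_on I f m) ->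
  A a0 -> I i0 -> r = a0 + i0 -> ~ (exists a, (A a /\ I a) /\ f a = f i0) ->
  ~ add_pred A M r.
Proof.
move=> subA subI homf MK Aa0 Ii0 -> nsep [a [m [Aa /MK [Im fm0] e]]]; apply: nsep.
have e' : a - a0 = i0 - m.
  by rewrite -[a](addrK m) -e addrAC [a0 + i0]addrC addrK.
exists (a - a0); split; first split.
- exact: (addsubB (subring_addsubgroup subA) Aa Aa0).
- by rewrite e'; apply: (addsubB (subring_addsubgroup subI) Ii0 Im).
- by rewrite e' (hom_onB subI homf) // fm0 subr0.
Qed.

Theorem proposition3 (K : nuRingType) (I : K -> Prop) :
  is_ideal I -> fin_gen_ring K -> quotient_add_fg I -> fin_sep_on I -> fin_sep K.
Proof.
move=> idI _ /spans_mod_quotient_add_fg [g gI] sepI r A _ subA _ nAr.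
have subI := ideal_subring idI.
have [[a0 [i0 [Aa0 Ii0 er]]] | nAIr] := EM (add_pred A I r); last first.
  exact: fin_separates_of_spans_mod subA idI gI nAIr.
have nAIi0 : ~ (A i0 /\ I i0).
  by case=> Ai0 _; apply: nAr; rewrite er; apply: (addsubD (subring_addsubgroup subA) Aa0 Ai0).
have [F [f [finF homf nsep]]] := sepI i0 _ Ii0 (subringI subA subI) (fun _ => @proj2 _ _) nAIi0.
have [gm gM] := spans_mod_core idI gI finF homf.
apply: (fin_separates_of_spans_mod subA (core_ideal (addsubgroup_kernel_on subI homf)) gM).
by apply: not_add_pred_kernel subA subI homf _ Aa0 Ii0 er nsep => m [].
Qed.
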